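(* Let $(x,y)$ be an $\mathbf{x}$-vertex of $R$. Then $y$ lies on an edge $\operatorname{conv}(y^1,y^2)$ of $Q_B$ (with $y^1,y^2$ vertices of $Q_B$). Moreover, if $x^1$ is a vertex of $P_A$ adjacent to $x$ and the step from $x$ to $x^1$ fails to lift to $R$, then the vertex at which this step terminates is of the form $(x',y^i)$ for some $x'\in\operatorname{conv}(x,x^1)$ and some $i\in\{1,2\}$.
   Context: Let $A\in\mathbb{R}^{m_1\times n_1}$, nonzero $a\in\mathbb{R}^{1\times n_1}$, nonzero $b\in\mathbb{R}^{1\times n_2}$, $B\in\mathbb{R}^{m_2\times n_2}$, $c_A\in\mathbb{R}^{m_1}$, $c_B\in\mathbb{R}^{m_2}$, $c_a,c_b\in\mathbb{R}$, and $R=\{(x,y)\in\mathbb{R}^{n_1}\times\mathbb{R}^{n_2}: Ax=c_A,\ ax+by=c_a+c_b,\ By=c_B,\ x,y\ge 0\}$. Assume $R$ is simple (nondegenerate). Let $P_A=\{x: Ax=c_A, x\ge 0\}$ and $Q_B=\{y: By=c_B, y\ge 0\}$. A vertex $(x,y)$ of $R$ is an $\mathbf{x}$-vertex if $x$ is a vertex of $P_A$. For an $\mathbf{x}$-vertex $(x,y)$ and a vertex $x^1$ of $P_A$ adjacent to $x$, the step from $x$ to $x^1$ lifts to $R$ if there exists $y'$ with $(x^1,y')\in R$ and $\operatorname{supp}(y')=\operatorname{supp}(y)$, and otherwise fails to lift. Lifting the step means moving from $(x,y)$ along the edge of $R$ given by $\{(u,v)\in R: \operatorname{supp}(u)\subseteq\operatorname{supp}(x)\cup\operatorname{supp}(x^1),\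 \operatorname{supp}(v)\subseteq\operatorname{supp}(y)\}$ (with $u$ moving along the segment from $x$ toward $x^1$); the step terminates at the endpoint of this edge other than $(x,y)$. *)

From HB Require Import structures.
From mathcomp Require Import all_boot all_order all_algebra.
Set Implicit Arguments. Unset Strict Implicit. Unset Printing Implicit Defensive.
Import Order.TTheory GRing.Theory Num.Theory.
Local Open Scope ring_scope.

Section Defs.
Variable R : realFieldType.

Definition nonneg n (x : 'cV[R]_n) : Prop := forall i, 0 <= x i 0.

Definition supp n (x : 'cV[R]_n) : {set 'I_n} := [set i | x i 0 != 0].

Definition polyh m n (M : 'M[R]_(m, n)) (c : 'cV[R]_m) (x : 'cV[R]_n) : Prop :=
  M *m x = c /\ nonneg x.

Definition bounded n (S : 'cV[R]_n -> Prop) : Prop :=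
  exists K : R, forall x, S x -> forall i, `|x i 0| <= K.

Definition seg n (u v : 'cV[R]_n) (z : 'cV[R]_n) : Prop :=
  exists t : R, 0 <= t <= 1 /\ z = t *: u + (1 - t) *: v.

Definition vertex n (S : 'cV[R]_n -> Prop) (z : 'cV[R]_n) : Prop :=
  S z /\ forall u v (t : R), S u -> S v -> 0 < t < 1 ->
    z = t *: u + (1 - t) *: v -> u = z /\ v = z.

Definition is_edge n (S : 'cV[R]_n -> Prop) (u v : 'cV[R]_n) : Prop :=
  u != v /\ vertex S u /\ vertex S v /\
  forall p q (t : R), S p -> S q -> 0 < t < 1 ->
    seg u v (t *: p + (1 - t) *: q) -> seg u v p /\ seg u v q.

Definition Rset m1 n1 m2 n2 (A : 'M[R]_(m1, n1)) (a : 'rV[R]_n1)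
  (b : 'rV[R]_n2) (B : 'M[R]_(m2, n2)) (cA : 'cV[R]_m1) (cB : 'cV[R]_m2)
  (ca cb : R) (x : 'cV[R]_n1) (y : 'cV[R]_n2) : Prop :=
  A *m x = cA /\ a *m x + b *m y = (ca + cb)%:M /\ B *m y = cB /\
  nonneg x /\ nonneg y.

Definition vertex2 n1 n2 (S : 'cV[R]_n1 -> 'cV[R]_n2 -> Prop)
  (x : 'cV[R]_n1) (y : 'cV[R]_n2) : Prop :=
  S x y /\ forall x1 y1 x2 y2 (t : R), S x1 y1 -> S x2 y2 -> 0 < t < 1 ->
    x = t *: x1 + (1 - t) *: x2 -> y = t *: y1 + (1 - t) *: y2 ->
    [/\ x1 = x, y1 = y, x2 = x & y2 = y].

(* R is simple (R_nondegenerate): every vertex has exactly m1 + m2 + 1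
   nonzero coordinates (one per equality constraint). *)
Definition R_nondegenerate (m1 m2 : nat) n1 n2 (S : 'cV[R]_n1 -> 'cV[R]_n2 -> Prop) : Prop :=
  forall x y, vertex2 S x y -> (#|supp x| + #|supp y|)%N = (m1 + m2 + 1)%N.

Definition lifts n1 n2 (S : 'cV[R]_n1 -> 'cV[R]_n2 -> Prop)
  (x1 : 'cV[R]_n1) (y : 'cV[R]_n2) : Prop :=
  exists y', S x1 y' /\ supp y' = supp y.

(* the edge of R along which the step is lifted *)
Definition step_edge n1 n2 (S : 'cV[R]_n1 -> 'cV[R]_n2 -> Prop)
  (x x1 : 'cV[R]_n1) (y : 'cV[R]_n2) (u : 'cV[R]_n1) (v : 'cV[R]_n2) : Prop :=
  S u v /\ supp u \subset supp x :|: supp x1 /\ supp v \subset supp y.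

Definition step_end n1 n2 (S : 'cV[R]_n1 -> 'cV[R]_n2 -> Prop)
  (x x1 : 'cV[R]_n1) (y : 'cV[R]_n2) (u : 'cV[R]_n1) (v : 'cV[R]_n2) : Prop :=
  vertex2 (step_edge S x x1 y) u v /\ (u, v) <> (x, y).

End Defs.

From HB Require Import structures.
From mathcomp Require Import all_boot all_order all_algebra.
From mathcomp Require Import ring lra zify.
Import Order.TTheory GRing.Theory Num.Theory.
Set Implicit Arguments. Unset Strict Implicit. Unset Printing Implicit Defensive.
Local Open Scope ring_scope.

(* Since x is a vertex of P_A, its support has at most m1 elements, so by
   nondegeneracy supp y has more than m2: the kernel of B on supp y is nonzero.
   Because (x, y) is a vertex of R, this kernel meets the kernel of b trivially,
   hence it is a line, and the face of Q_B of points supported in supp y is a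
   bounded segment [y1, y2], an edge of Q_B containing y.  Along the step edge,
   u stays on [x, x1] and v on [y1, y2].  If v were interior to [y1, y2], then
   either u = x, which forces v = y; or u = x1, and then supp v = supp y, so the
   step lifts; or u is interior too, and the single linear constraint
   a u + b v = ca + cb leaves a direction of motion through (u, v) inside the
   step edge, contradicting that (u, v) is a vertex of it. *)

Section Polyhedra.
Variable F : realFieldType.

Lemma supp_subP n (x : 'cV[F]_n) (S : {set 'I_n}) :
  reflect (forall i, i \notin S -> x i 0 = 0) (supp x \subset S).
Proof.
apply: (iffP subsetP) => [sub i iS | x0 i].
  by apply/eqP; apply: contraNT iS => xi; apply: sub; rewrite inE.
by rewrite inE; apply: contraR => /x0 ->; rewrite eqxx.
Qed.

Lemma supp_lin n (p q : 'cV[F]_n) (S : {set 'I_n}) s t :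
  supp p \subset S -> supp q \subset S -> supp (s *: p + t *: q) \subset S.
Proof.
move=> /supp_subP p0 /supp_subP q0; apply/supp_subP => i iS.
by rewrite !mxE p0 ?q0 // !mulr0 addr0.
Qed.

Lemma suppDZ n (p q : 'cV[F]_n) (S : {set 'I_n}) t :
  supp p \subset S -> supp q \subset S -> supp (p + t *: q) \subset S.
Proof.
move=> /supp_subP p0 /supp_subP q0; apply/supp_subP => i iS.
by rewrite !mxE p0 ?q0 // mulr0 addr0.
Qed.

Lemma suppB n (p q : 'cV[F]_n) (S : {set 'I_n}) :
  supp p \subset S -> supp q \subset S -> supp (p - q) \subset S.
Proof.
move=> /supp_subP p0 /supp_subP q0; apply/supp_subP => i iS.
by rewrite !mxE p0 ?q0 // subr0.
Qed.

Lemma suppN n (p : 'cV[F]_n) : supp (- p) = supp p.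
Proof. by apply/setP => i; rewrite !inE mxE oppr_eq0. Qed.

Lemma seg_supp n (u v z : 'cV[F]_n) (S : {set 'I_n}) :
  supp u \subset S -> supp v \subset S -> seg u v z -> supp z \subset S.
Proof. by move=> su sv [t [_ ->]]; apply: supp_lin. Qed.

Lemma supp_conv n (p q : 'cV[F]_n) s : nonneg p -> nonneg q -> 0 < s < 1 ->
  supp (s *: p + (1 - s) *: q) = supp p :|: supp q.
Proof.
move=> p0 q0 /andP[s0 s1]; apply/setP => i; rewrite !inE !mxE.
have s1' : 0 < 1 - s by rewrite subr_gt0.
have pi := p0 i; have qi := q0 i.
rewrite paddr_eq0 ?mulr_ge0 ?(ltW s0) ?(ltW s1') // !mulf_eq0.
by rewrite (gt_eqF s0) (gt_eqF s1') negb_and.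
Qed.

Lemma nonneg_conv n (p q : 'cV[F]_n) s : nonneg p -> nonneg q -> 0 <= s <= 1 ->
  nonneg (s *: p + (1 - s) *: q).
Proof.
move=> p0 q0 /andP[s0 s1] i; rewrite !mxE.
by rewrite addr_ge0 // mulr_ge0 // subr_ge0.
Qed.

Lemma polyh_conv m n (M : 'M[F]_(m, n)) c p q s :
  polyh M c p -> polyh M c q -> 0 <= s <= 1 -> polyh M c (s *: p + (1 - s) *: q).
Proof.
move=> [Mp p0] [Mq q0] s01; split; last exact: nonneg_conv.
by rewrite mulmxDr -!scalemxAr Mp Mq -scalerDl addrC subrK scale1r.
Qed.

Lemma conv_shift n (p q : 'cV[F]_n) s r :
  s *: p + (1 - s) *: q + r *: (p - q) = (s + r) *: p + (1 - (s + r)) *: q.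
Proof. by apply/matrixP => i j; rewrite !mxE; ring. Qed.

(* Any step shorter than the smallest ratio z_i / |e_i| stays nonnegative;
   the sum of the ratios is a cheap upper bound for all of them. *)
Lemma nonneg_perturb n (z e : 'cV[F]_n) : nonneg z -> supp e \subset supp z ->
  exists2 eps : F, 0 < eps & forall t, `|t| <= eps -> nonneg (z + t *: e).
Proof.
move=> z0 /supp_subP se.
pose S := \sum_i `|e i 0| / z i 0.
have ratio_ge0 i : 0 <= `|e i 0| / z i 0 by rewrite divr_ge0 ?z0.
have S0 : 0 <= S by rewrite sumr_ge0.
have S1 : 0 < 1 + S by lra.
exists (1 + S)^-1 => [|t t_le i]; first by rewrite invr_gt0.
rewrite !mxE; have [zi0|zi_neq0] := eqVneq (z i 0) 0.
  by rewrite se ?inE ?zi0 ?eqxx // mulr0 addr0.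
have zi_gt0 : 0 < z i 0 by rewrite lt_def zi_neq0 z0.
have ratio_le : `|e i 0| / z i 0 <= S by rewrite /S (bigD1 i) //= lerDl sumr_ge0.
have ei_le : `|e i 0| <= S * z i 0 by rewrite -ler_pdivrMr.
have inv_gt0 : 0 < (1 + S)^-1 by rewrite invr_gt0.
have invS : (1 + S)^-1 * (1 + S) = 1 by rewrite mulVf // gt_eqF.
have te_le : `|t| * `|e i 0| <= z i 0.
  by have := normr_ge0 (e i 0); have := normr_ge0 t; nra.
by have := ler_norm (- (t * e i 0)); rewrite normrN normrM; lra.
Qed.

Lemma polyh_perturb m n (M : 'M[F]_(m, n)) c z e :
  polyh M c z -> M *m e = 0 -> supp e \subset supp z ->
  exists2 eps : F, 0 < eps & forall t, `|t| <= eps -> polyh M c (z + t *: e).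
Proof.
move=> [Mz z0] Me se; have [eps eps0 nn] := nonneg_perturb z0 se.
by exists eps => // t /nn; split; rewrite // mulmxDr -scalemxAr Me scaler0 addr0.
Qed.

Lemma midpoint_perturb n (z e : 'cV[F]_n) (eps : F) :
  z = 2^-1 *: (z + eps *: e) + (1 - 2^-1) *: (z + (- eps) *: e).
Proof.
have two_neq0 : (2 : F) != 0 by rewrite pnatr_eq0.
by apply/matrixP => i j; rewrite !mxE; field.
Qed.

Lemma half_in01 : 0 < (2^-1 : F) < 1.
Proof. by rewrite invr_gt0 ltr0n /= invf_lt1 ?ltr0n // ltr1n. Qed.

Lemma perturb_eq0 n (z e : 'cV[F]_n) (eps : F) : 0 < eps -> z + eps *: e = z -> e = 0.
Proof.
move=> eps0 /(congr1 (fun w => w - z)) /eqP.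
by rewrite addrAC subrr add0r scaler_eq0 gt_eqF //= => /eqP.
Qed.

Lemma vertex_line n (S : 'cV[F]_n -> Prop) z e (eps : F) :
  vertex S z -> 0 < eps -> (forall t, `|t| <= eps -> S (z + t *: e)) -> e = 0.
Proof.
move=> [_ vz] eps0 Se.
have eps_le : `|eps| <= eps by rewrite gtr0_norm.
have neps_le : `|- eps| <= eps by rewrite normrN gtr0_norm.
have [ze _] := vz _ _ _ (Se _ eps_le) (Se _ neps_le) half_in01 (midpoint_perturb z e eps).
exact: perturb_eq0 eps0 ze.
Qed.

Lemma vertex2_line n1 n2 (S : 'cV[F]_n1 -> 'cV[F]_n2 -> Prop) x y ex ey (eps : F) :
  vertex2 S x y -> 0 < eps ->
  (forall t, `|t| <= eps -> S (x + t *: ex) (y + t *: ey)) -> ex = 0 /\ ey = 0.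
Proof.
move=> [_ vxy] eps0 Se.
have eps_le : `|eps| <= eps by rewrite gtr0_norm.
have neps_le : `|- eps| <= eps by rewrite normrN gtr0_norm.
have [xe ye _ _] := vxy _ _ _ _ _ (Se _ eps_le) (Se _ neps_le) half_in01
  (midpoint_perturb x ex eps) (midpoint_perturb y ey eps).
by split; [exact: perturb_eq0 eps0 xe | exact: perturb_eq0 eps0 ye].
Qed.

Lemma vertex_ker m n (M : 'M[F]_(m, n)) c z d :
  vertex (polyh M c) z -> M *m d = 0 -> supp d \subset supp z -> d = 0.
Proof.
move=> vz Md sd; have [eps eps0 Pz] := polyh_perturb vz.1 Md sd.
exact: vertex_line vz eps0 Pz.
Qed.

Lemma kernel_vector_in_supp m n (M : 'M[F]_(m, n)) (S : {set 'I_n}) :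
  (m < #|S|)%N -> exists2 d : 'cV[F]_n, d != 0 & M *m d = 0 /\ supp d \subset S.
Proof.
move=> ltmS; pose E : 'M[F]_(#|S|, n) := rowsub enum_val 1%:M.
have : ~~ row_free (E *m M^T).
  by rewrite /row_free neq_ltn (leq_ltn_trans (rank_leq_col _) ltmS).
rewrite -kermx_eq0 => /rowV0Pn[v /sub_kermxP vEM v_neq0].
have vE j : (v *m E)^T j 0 = \sum_k v 0 k *+ (enum_val k == j).
  by rewrite !mxE; apply: eq_bigr => k _; rewrite !mxE mulrnAr mulr1.
exists (v *m E)^T; last split.
- apply: contra v_neq0 => /eqP vE0; apply/eqP/rowP => k.
  have := vE (enum_val k); rewrite (bigD1 k) //= eqxx big1 ?addr0 => [|l lk].
    by rewrite vE0 !mxE.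
  by rewrite (inj_eq enum_val_inj) (negbTE lk).
- by rewrite -[M]trmxK -trmx_mul -mulmxA vEM trmx0.
- apply/supp_subP => j jS; rewrite vE big1 // => k _.
  by rewrite (_ : _ == j = false) //; apply: contraNF jS => /eqP <-; exact: enum_valP.
Qed.

Lemma vertex_card_supp m n (M : 'M[F]_(m, n)) c z :
  vertex (polyh M c) z -> (#|supp z| <= m)%N.
Proof.
move=> vz; rewrite leqNgt; apply/negP => lt_m_supp.
have [d d_neq0 [Md sd]] := kernel_vector_in_supp M lt_m_supp.
by move/eqP: d_neq0; apply; exact: vertex_ker vz Md sd.
Qed.

Lemma bounded_ker_neg_coord m n (M : 'M[F]_(m, n)) c (z e : 'cV[F]_n) :
  bounded (polyh M c) -> polyh M c z -> M *m e = 0 -> e != 0 -> exists j, e j 0 < 0.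
Proof.
move=> [K bndK] [Mz z0] Me /cV0Pn[i ei_neq0].
have [j ej|e_ge0] := pickP (fun j => e j 0 < 0); first by exists j.
have {}e_ge0 j : 0 <= e j 0 by rewrite leNgt e_ge0.
have ei_gt0 : 0 < e i 0 by rewrite lt_def ei_neq0 e_ge0.
pose t := (`|K| + 1) / e i 0.
have t_ge0 : 0 <= t by rewrite divr_ge0 ?e_ge0 ?addr_ge0.
have Pzt : polyh M c (z + t *: e).
  split; first by rewrite mulmxDr -scalemxAr Me scaler0 addr0 Mz.
  by move=> j; rewrite !mxE; have := z0 j; have := e_ge0 j; nra.
have := bndK _ Pzt i; rewrite !mxE /t divfK ?gt_eqF //.
have := ler_norm K; have := ler_norm (z i 0 + (`|K| + 1)); have := z0 i; lra.
Qed.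

Lemma ray_exit n (y e : 'cV[F]_n) j : nonneg y -> supp e \subset supp y -> e j 0 < 0 ->
  exists t k, [/\ 0 < t, e k 0 < 0, (y + t *: e) k 0 = 0 & nonneg (y + t *: e)].
Proof.
move=> y0 /subsetP se ej.
pose ratio k := y k 0 / - e k 0.
have [k ek min_k] := arg_minP (P := fun k => e k 0 < 0) ratio ej.
have yk : 0 < y k 0.
  have : k \in supp y by apply: se; rewrite inE lt_eqF.
  by rewrite inE lt_def (y0 k) andbT.
have nek : 0 < - e k 0 by rewrite oppr_gt0.
exists (ratio k), k; split => //.
- exact: divr_gt0.
- by rewrite !mxE /ratio; field; rewrite lt_eqF.
move=> i; rewrite !mxE; have [ei|ei] := leP 0 (e i 0).
  by rewrite addr_ge0 // mulr_ge0 // divr_ge0 // ltW.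
have := min_k i ei; rewrite /ratio ler_pdivlMr ?oppr_gt0 //.
by have := y0 i; nra.
Qed.

Lemma bounded_ray_exit m n (M : 'M[F]_(m, n)) c (y e : 'cV[F]_n) :
  bounded (polyh M c) -> polyh M c y -> M *m e = 0 -> e != 0 -> supp e \subset supp y ->
  exists t k, [/\ 0 < t, e k 0 < 0, (y + t *: e) k 0 = 0 & polyh M c (y + t *: e)].
Proof.
move=> bndM Py Me e_neq0 se; have [j ej] := bounded_ker_neg_coord bndM Py Me e_neq0.
have [t [k [t_gt0 ek yk yt0]]] := ray_exit Py.2 se ej.
by exists t, k; split=> //; split; rewrite // mulmxDr -scalemxAr Me scaler0 addr0 Py.1.
Qed.

(* The midpoint of the edge has support supp x :|: supp x1, so it can be pushed
   slightly beyond itself away from u; the face property of the edge then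
   applies to the segment joining u and the pushed point. *)
Lemma edge_seg_of_supp m n (M : 'M[F]_(m, n)) c x x1 u :
  is_edge (polyh M c) x x1 -> polyh M c u -> supp u \subset supp x :|: supp x1 ->
  seg x x1 u.
Proof.
move=> [_ [[Px _] [[Px1 _] face]]] Pu su.
have half01 := half_in01; have half01' : 0 <= (2^-1 : F) <= 1.
  by case/andP: half01 => h0 h1; rewrite !ltW.
pose mid := 2^-1 *: x + (1 - 2^-1) *: x1.
have Pmid : polyh M c mid by exact: polyh_conv.
have supp_mid : supp mid = supp x :|: supp x1 := supp_conv Px.2 Px1.2 half01.
have [eps eps0 Pw] : exists2 eps : F, 0 < eps & polyh M c (mid + eps *: (mid - u)).
  have M_dir : M *m (mid - u) = 0 by rewrite mulmxBr Pmid.1 Pu.1 subrr.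
  have supp_dir : supp (mid - u) \subset supp mid by rewrite suppB // supp_mid.
  have [eps eps0 Pt] := polyh_perturb Pmid M_dir supp_dir.
  by exists eps => //; apply: Pt; rewrite gtr0_norm.
pose s := (1 + eps)^-1.
have s01 : 0 < s < 1 by rewrite invr_gt0 invf_lt1 ?ltrDl ?addr_gt0.
have eps1_neq0 : 1 + eps != 0 by rewrite gt_eqF ?addr_gt0.
have mid_eq : mid = s *: (mid + eps *: (mid - u)) + (1 - s) *: u.
  by apply/matrixP => i j; rewrite /s !mxE; field.
have seg_mid : seg x x1 mid by exists 2^-1.
by rewrite mid_eq in seg_mid; have [] := face _ _ _ Pw Pu s01 seg_mid.
Qed.

Lemma itv01_cases (t : F) : 0 <= t <= 1 -> [\/ t = 0, t = 1 | 0 < t < 1].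
Proof.
case/andP=> t_ge0 t_le1; have [->|t_neq0] := eqVneq t 0; first by constructor 1.
have [->|t_neq1] := eqVneq t 1; first by constructor 2.
by constructor 3; rewrite lt_def t_neq0 t_ge0 lt_neqAle t_neq1 t_le1.
Qed.

Lemma open_itv01_perturb (s p : F) : 0 < s < 1 ->
  exists2 eps : F, 0 < eps & forall t, `|t| <= eps -> 0 <= s + t * p <= 1.
Proof.
case/andP=> s_gt0 s_lt1; pose r := Num.min s (1 - s).
have r_gt0 : 0 < r by rewrite lt_min s_gt0 subr_gt0.
have [r_le_s r_le_1s] : r <= s /\ r <= 1 - s by rewrite !ge_min !lexx orbT.
have p1_gt0 : 0 < `|p| + 1 by rewrite ltr_pwDr.
exists (r / (`|p| + 1)) => [|t t_le]; first exact: divr_gt0.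
have tp_le : `|t * p| <= r.
  rewrite normrM (le_trans (ler_wpM2r (normr_ge0 p) t_le)) //.
  by rewrite mulrAC ler_pdivrMr // ler_pM2l // lerDl.
by have := ler_norm (t * p); have := ler_norm (- (t * p)); rewrite normrN; lra.
Qed.

Section LineFace.
Variables (m n : nat) (M : 'M[F]_(m, n)) (c : 'cV[F]_m) (y d : 'cV[F]_n).
Hypotheses (bndM : bounded (polyh M c)) (Py : polyh M c y).
Hypotheses (d_neq0 : d != 0) (Md : M *m d = 0) (supp_d : supp d \subset supp y).
Hypothesis ker_line :
  forall w, M *m w = 0 -> supp w \subset supp y -> exists g, w = g *: d.

Lemma face_line p : polyh M c p -> supp p \subset supp y -> exists g, p = y + g *: d.
Proof.
move=> [Mp _] sp; have M_py : M *m (p - y) = 0 by rewrite mulmxBr Mp Py.1 subrr.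
have [g pyE] := ker_line M_py (suppB sp (subxx _)).
by exists g; rewrite -pyE addrC subrK.
Qed.

Lemma face_eq_coord p q k :
  polyh M c p -> supp p \subset supp y -> polyh M c q -> supp q \subset supp y ->
  d k 0 != 0 -> p k 0 = q k 0 -> p = q.
Proof.
move=> Pp sp Pq sq dk; have [g ->] := face_line Pp sp; have [h ->] := face_line Pq sq.
rewrite !mxE => /addrI/eqP; rewrite -subr_eq0 -mulrBl mulf_eq0 (negbTE dk) orbF.
by rewrite subr_eq0 => /eqP ->.
Qed.

Lemma face_vertex z k : polyh M c z -> supp z \subset supp y ->
  d k 0 != 0 -> z k 0 = 0 -> vertex (polyh M c) z.
Proof.
move=> Pz sz dk zk; split=> // p q s Pp Pq s01 zE.
have supp_pq := supp_conv Pp.2 Pq.2 s01; rewrite -zE in supp_pq.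
have k_notin : k \notin supp z by rewrite inE zk eqxx.
have sp : supp p \subset supp z by rewrite supp_pq subsetUl.
have sq : supp q \subset supp z by rewrite supp_pq subsetUr.
have pinned r : polyh M c r -> supp r \subset supp z -> r = z.
  move=> Pr sr; apply: face_eq_coord dk _ => //; first exact: subset_trans sr sz.
  by rewrite zk; move/supp_subP: sr; apply.
by split; apply: pinned.
Qed.

Section Endpoints.
Variables (t1 t2 : F) (k1 k2 : 'I_n).
Hypotheses (t1_gt0 : 0 < t1) (t2_gt0 : 0 < t2) (dk1 : d k1 0 < 0) (dk2 : 0 < d k2 0).
Local Notation y1 := (y + t1 *: d).
Local Notation y2 := (y - t2 *: d).
Hypotheses (y1k1 : y1 k1 0 = 0) (y2k2 : y2 k2 0 = 0).
Hypotheses (Py1 : polyh M c y1) (Py2 : polyh M c y2).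

Lemma supp_y1 : supp y1 \subset supp y.
Proof. exact: suppDZ. Qed.

Lemma supp_y2 : supp y2 \subset supp y.
Proof. by rewrite -scaleNr; apply: suppDZ. Qed.

Lemma face_seg p : polyh M c p -> supp p \subset supp y -> seg y1 y2 p.
Proof.
move=> Pp sp; have [g pE] := face_line Pp sp.
have := Pp.2 k1; have := Pp.2 k2; move: y1k1 y2k2; rewrite pE !mxE => e1 e2 p2 p1.
have g_le : g <= t1.
  have : 0 <= (g - t1) * d k1 0 by rewrite mulrBl; lra.
  by rewrite nmulr_lge0 // subr_le0.
have le_g : - t2 <= g.
  have : 0 <= (g + t2) * d k2 0 by rewrite mulrDl; lra.
  by rewrite pmulr_lge0 // -lerBlDr sub0r.
have tt_gt0 : 0 < t1 + t2 by rewrite addr_gt0.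
exists ((g + t2) / (t1 + t2)); split.
  by rewrite divr_ge0 ?ler_pdivrMr //=; lra.
apply/matrixP => i j; rewrite !mxE.
by field; rewrite gt_eqF.
Qed.

Lemma line_face_is_edge : is_edge (polyh M c) y1 y2.
Proof.
split; [|split; [|split]].
- apply/eqP => /(congr1 (fun w : 'cV[F]_n => w k1 0)) /=; rewrite y1k1 !mxE => y12.
  have : (t1 + t2) * d k1 0 = 0 by move: y1k1; rewrite !mxE; lra.
  by apply/eqP; rewrite mulf_eq0 negb_or gt_eqF ?addr_gt0 // lt_eqF.
- exact: face_vertex Py1 supp_y1 (ltr0_neq0 dk1) y1k1.
- exact: face_vertex Py2 supp_y2 (lt0r_neq0 dk2) y2k2.
move=> p q s Pp Pq s01 /(seg_supp supp_y1 supp_y2).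
rewrite (supp_conv Pp.2 Pq.2 s01) subUset => /andP[sp sq].
by split; apply: face_seg.
Qed.

End Endpoints.

Lemma line_face_edge : exists y1 y2,
  [/\ is_edge (polyh M c) y1 y2, supp y1 \subset supp y, supp y2 \subset supp y &
      forall p, polyh M c p -> supp p \subset supp y -> seg y1 y2 p].
Proof.
have [t1 [k1 [t1_gt0 dk1 y1k1 Py1]]] := bounded_ray_exit bndM Py Md d_neq0 supp_d.
have M_nd : M *m (- d) = 0 by rewrite mulmxN Md oppr0.
have nd_neq0 : - d != 0 by rewrite oppr_eq0.
have supp_nd : supp (- d) \subset supp y by rewrite suppN.
have [t2 [k2 [t2_gt0 dk2 y2k2 Py2]]] := bounded_ray_exit bndM Py M_nd nd_neq0 supp_nd.
rewrite scalerN in y2k2 Py2; rewrite mxE oppr_lt0 in dk2.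
exists (y + t1 *: d), (y - t2 *: d); split.
- exact: line_face_is_edge y1k1 y2k2 Py1 Py2.
- exact: supp_y1.
- exact: supp_y2.
- exact: face_seg t1_gt0 t2_gt0 dk1 dk2 y1k1 y2k2.
Qed.

End LineFace.

Section Lifting.
Variables (m1 n1 m2 n2 : nat) (A : 'M[F]_(m1, n1)) (a : 'rV[F]_n1).
Variables (b : 'rV[F]_n2) (B : 'M[F]_(m2, n2)) (cA : 'cV[F]_m1) (cB : 'cV[F]_m2).
Variables (ca cb : F).
Local Notation RAB := (Rset A a b B cA cB ca cb).

Lemma Rvertex_ker x y w : vertex2 RAB x y ->
  B *m w = 0 -> supp w \subset supp y -> b *m w = 0 -> w = 0.
Proof.
move=> vxy Bw sw bw; have [Ax [abxy [By [x0 y0]]]] := vxy.1.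
have [eps eps0 yw0] := nonneg_perturb y0 sw.
suff [] : (0 : 'cV[F]_n1) = 0 /\ w = 0 by [].
apply: (vertex2_line vxy eps0) => t /yw0 ytw0.
rewrite /Rset scaler0 addr0 !mulmxDr -!scalemxAr Bw bw !scaler0 !addr0.
by do !split.
Qed.

Lemma Rvertex_card_supp x y : R_nondegenerate m1 m2 RAB ->
  vertex2 RAB x y -> vertex (polyh A cA) x -> (m2 < #|supp y|)%N.
Proof. by move=> nondeg vxy vx; have := nondeg _ _ vxy; have := vertex_card_supp vx; lia. Qed.

(* The kernel of B on supp y meets the kernel of b trivially, so it is at most a line. *)
Lemma Rvertex_ker_line x y d : vertex2 RAB x y ->
  d != 0 -> B *m d = 0 -> supp d \subset supp y ->
  forall w, B *m w = 0 -> supp w \subset supp y -> exists g, w = g *: d.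
Proof.
move=> vxy d_neq0 Bd sd w Bw sw.
have [beta bdE] : exists beta, b *m d = beta%:M := ex_intro _ _ (mx11_scalar _).
have [omega bwE] : exists omega, b *m w = omega%:M := ex_intro _ _ (mx11_scalar _).
have beta_neq0 : beta != 0.
  apply: contra d_neq0 => /eqP beta0; apply/eqP.
  by apply: Rvertex_ker vxy Bd sd _; rewrite bdE beta0 raddf0.
exists (omega / beta); apply/eqP; rewrite -subr_eq0; apply/eqP.
apply: (Rvertex_ker vxy).
- by rewrite mulmxBr -scalemxAr Bw Bd scaler0 subrr.
- by rewrite -scaleNr suppDZ.
- by rewrite mulmxBr -scalemxAr bwE bdE scale_scalar_mx divfK // subrr.
Qed.

Section StepEnd.
Variables (x x1 : 'cV[F]_n1) (y y1 y2 : 'cV[F]_n2).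
Hypotheses (vxy : vertex2 RAB x y) (edge_x : is_edge (polyh A cA) x x1).
Hypotheses (edge_y : is_edge (polyh B cB) y1 y2).
Hypotheses (supp_y1 : supp y1 \subset supp y) (supp_y2 : supp y2 \subset supp y).
Hypothesis face_y : forall p, polyh B cB p -> supp p \subset supp y -> seg y1 y2 p.

Lemma step_edge_conv s l : 0 <= s <= 1 -> 0 <= l <= 1 ->
  a *m (s *: x + (1 - s) *: x1) + b *m (l *: y1 + (1 - l) *: y2) = (ca + cb)%:M ->
  step_edge RAB x x1 y (s *: x + (1 - s) *: x1) (l *: y1 + (1 - l) *: y2).
Proof.
move=> s01 l01 ab_eq; have [_ [[Px _] [[Px1 _] _]]] := edge_x.
have [_ [[Py1 _] [[Py2 _] _]]] := edge_y.
have [Au u0] := polyh_conv Px Px1 s01; have [Bv v0] := polyh_conv Py1 Py2 l01.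
split; first by do !split.
by split; apply: supp_lin; rewrite ?subsetUl ?subsetUr.
Qed.

Lemma step_end_not_at_x v : ~ step_end RAB x x1 y x v.
Proof.
move=> [[[[_ [abxv [Bv [_ v0]]]] [_ sv]] _] neq_xy]; apply: neq_xy; congr pair.
have [_ [abxy [By _]]] := vxy.1.
have bv : b *m (v - y) = 0.
  by rewrite mulmxBr; apply/eqP; rewrite subr_eq0 -(inj_eq (addrI (a *m x))) abxv abxy.
apply/eqP; rewrite -subr_eq0; apply/eqP; apply: Rvertex_ker vxy _ _ bv.
- by rewrite mulmxBr Bv By subrr.
- exact: suppB.
Qed.

Lemma step_end_at_x1_lifts v l : step_end RAB x x1 y x1 v ->
  0 < l < 1 -> v = l *: y1 + (1 - l) *: y2 -> lifts RAB x1 y.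
Proof.
move=> [[[Rx1v [_ sv]] _] _] l01 vE; exists v; split=> //.
have [_ [[[_ y1_0] _] [[[_ y2_0] _] _]]] := edge_y.
have [_ [_ [By [_ y0]]]] := vxy.1.
apply/eqP; rewrite eqEsubset sv vE supp_conv //.
exact: seg_supp (subsetUl _ _) (subsetUr _ _) (face_y (conj By y0) (subxx _)).
Qed.

(* Were u and v both interior to their segments, moving them along x - x1 and
   y1 - y2 in the ratio that keeps a u + b v fixed would not leave the step edge. *)
Lemma step_end_interior u v s l : step_end RAB x x1 y u v ->
  0 < s < 1 -> u = s *: x + (1 - s) *: x1 ->
  0 < l < 1 -> v = l *: y1 + (1 - l) *: y2 -> False.
Proof.
move=> [v_uv _] s01 uE l01 vE; have [[_ [abuv _]] _] := v_uv.1.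
have [alpha aE] : exists alpha, a *m (x - x1) = alpha%:M := ex_intro _ _ (mx11_scalar _).
have [beta bE] : exists beta, b *m (y1 - y2) = beta%:M := ex_intro _ _ (mx11_scalar _).
have beta_neq0 : beta != 0.
  have [y12 [[[By1 _] _] [[[By2 _] _] _]]] := edge_y.
  apply: contra y12 => /eqP beta0; rewrite -subr_eq0; apply/eqP.
  apply: Rvertex_ker vxy _ (suppB supp_y1 supp_y2) _.
  - by rewrite mulmxBr By1 By2 subrr.
  - by rewrite bE beta0 raddf0.
have [e1 e1_gt0 s_near] := open_itv01_perturb beta s01.
have [e2 e2_gt0 l_near] := open_itv01_perturb (- alpha) l01.
have eps_gt0 : 0 < Num.min e1 e2 by rewrite lt_min e1_gt0 e2_gt0.
suff [/eqP] : beta *: (x - x1) = 0 /\ (- alpha) *: (y1 - y2) = 0.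
  rewrite scaler_eq0 (negbTE beta_neq0) subr_eq0 /= => x_x1 _.
  by have [/negP] := edge_x.
apply: (vertex2_line v_uv eps_gt0) => t; rewrite le_min => /andP[t_le1 t_le2].
have ab_eq : a *m (u + (t * beta) *: (x - x1)) + b *m (v + (t * - alpha) *: (y1 - y2)) =
    (ca + cb)%:M.
  rewrite !mulmxDr -!scalemxAr aE bE addrACA abuv !scale_scalar_mx -raddfD /=.
  by rewrite mulrN mulNr mulrAC subrr raddf0 addr0.
rewrite !scalerA; rewrite uE vE !conv_shift in ab_eq *.
exact: step_edge_conv (s_near _ t_le1) (l_near _ t_le2) ab_eq.
Qed.

Lemma step_end_at_vertex u v : ~ lifts RAB x1 y -> step_end RAB x x1 y u v ->
  seg x x1 u /\ (v = y1 \/ v = y2).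
Proof.
move=> no_lift uv_end; have [[[[Au [_ [Bv [u0 v0]]]] [su sv]] _] _] := uv_end.
have seg_u : seg x x1 u := edge_seg_of_supp edge_x (conj Au u0) su.
split=> //; have [s [s01 uE]] := seg_u; have [l [l01 vE]] := face_y (conj Bv v0) sv.
case: (itv01_cases l01) => [l0|l1|l01']; [right|left|exfalso].
- by rewrite vE l0 scale0r add0r subr0 scale1r.
- by rewrite vE l1 subrr scale0r addr0 scale1r.
case: (itv01_cases s01) => [s0|s1|s01'].
- have u_x1 : u = x1 by rewrite uE s0 scale0r add0r subr0 scale1r.
  by apply: no_lift; rewrite u_x1 in uv_end; apply: step_end_at_x1_lifts uv_end l01' vE.
- have u_x : u = x by rewrite uE s1 subrr scale0r addr0 scale1r.
  by rewrite u_x in uv_end; apply: step_end_not_at_x uv_end.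
- exact: step_end_interior uv_end s01' uE l01' vE.
Qed.

End StepEnd.

End Lifting.

End Polyhedra.

Theorem lemma2 (F : realFieldType) (m1 n1 m2 n2 : nat)
  (A : 'M[F]_(m1, n1)) (a : 'rV[F]_n1) (b : 'rV[F]_n2) (B : 'M[F]_(m2, n2))
  (cA : 'cV[F]_m1) (cB : 'cV[F]_m2) (ca cb : F) :
  a != 0 -> b != 0 ->
  bounded (polyh A cA) -> bounded (polyh B cB) ->
  R_nondegenerate m1 m2 (Rset A a b B cA cB ca cb) ->
  forall (x : 'cV[F]_n1) (y : 'cV[F]_n2),
    vertex2 (Rset A a b B cA cB ca cb) x y -> vertex (polyh A cA) x ->
    exists y1 y2 : 'cV[F]_n2,
      is_edge (polyh B cB) y1 y2 /\ seg y1 y2 y /\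
      forall x1 : 'cV[F]_n1,
        is_edge (polyh A cA) x x1 ->
        ~ lifts (Rset A a b B cA cB ca cb) x1 y ->
        forall u v, step_end (Rset A a b B cA cB ca cb) x x1 y u v ->
          exists x', seg x x1 x' /\ u = x' /\ (v = y1 \/ v = y2).
Proof.
move=> _ _ _ bndB nondeg x y vxy vx; have [_ [_ [By [_ y0]]]] := vxy.1.
have [d d_neq0 [Bd sd]] := kernel_vector_in_supp B (Rvertex_card_supp nondeg vxy vx).
have [y1 [y2 [edge_y sy1 sy2 face_y]]] :=
  line_face_edge bndB (conj By y0) d_neq0 Bd sd (Rvertex_ker_line vxy d_neq0 Bd sd).
exists y1, y2; split=> //; split; first exact: face_y (conj By y0) (subxx _).
move=> x1 edge_x no_lift u v uv_end.
have [seg_u v_end] := step_end_at_vertex vxy edge_x edge_y sy1 sy2 face_y no_lift uv_end.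
by exists u.
Qed.
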